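(* Let $r>0$ and $A=\mathbb{Z}^r$ with its standard generating set (the standard basis vectors). Then for every $n\in\mathbb{N}$, the number of $\operatorname{Aut}(A)$-orbits of $A$ containing an element of word length at most $n$ is exactly $n+1$.
   Context: Word length of $g$ with respect to a generating set $\Sigma$ is the least $n$ such that $g$ is a product of $n$ elements of $\Sigma\cup\Sigma^{-1}$. *)

(* A = Z^r modelled as row vectors 'rV[int]_r. *)
From HB Require Import structures.
From mathcomp Require Import all_boot all_order all_algebra.
Set Implicit Arguments. Unset Strict Implicit. Unset Printing Implicit Defensive.
Import Order.TTheory GRing.Theory Num.Theory.
Local Open Scope ring_scope.

Definition is_aut (r : nat) (f : 'rV[int]_r -> 'rV[int]_r) : Prop :=
  {morph f : x y / x + y} /\ bijective f.

Definition same_orbit (r : nat) (x y : 'rV[int]_r) : Prop :=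
  exists f, is_aut f /\ f x = y.

Definition gen_pm (r : nat) (v : 'rV[int]_r) : Prop :=
  exists i : 'I_r, v = delta_mx 0 i \/ v = - delta_mx 0 i.

Definition is_word (r : nat) (s : seq 'rV[int]_r) (g : 'rV[int]_r) : Prop :=
  (forall v, v \in s -> gen_pm v) /\ \sum_(v <- s) v = g.

Definition word_length (r : nat) (g : 'rV[int]_r) (n : nat) : Prop :=
  (exists s, size s = n /\ is_word s g) /\
  (forall s, is_word s g -> (n <= size s)%N).

From mathcomp Require Import all_boot all_order all_algebra.
Set Implicit Arguments. Unset Strict Implicit. Unset Printing Implicit Defensive.
Import Order.TTheory GRing.Theory Num.Theory.
Local Open Scope ring_scope.

(* Divisibility by d is preserved by automorphisms, so the multiples c e0 of
   the first basis vector lie in pairwise distinct orbits.  Conversely the Smith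
   normal form of a row x gives an invertible integer matrix sending c e0 to x,
   where c divides every entry of x; as each entry is bounded by the word length
   of x, the orbits meeting the ball of radius n are those of 0, e0, ..., n e0,
   and k e0 has word length k. *)

Lemma morph_add0 (U V : zmodType) (f : U -> V) :
  {morph f : x y / x + y} -> f 0 = 0.
Proof. by move=> fD; apply: (addrI (f 0)); rewrite -fD !addr0. Qed.

Lemma morph_addMn (U V : zmodType) (f : U -> V) :
  {morph f : x y / x + y} -> forall x n, f (x *+ n) = f x *+ n.
Proof.
move=> fD x; elim=> [|n IHn]; first by rewrite !mulr0n (morph_add0 fD).
by rewrite !mulrS fD IHn.
Qed.

Lemma is_aut_mulmx r (M : 'M[int]_r) : M \in unitmx -> is_aut (mulmx^~ M).
Proof.
move=> uM; split; first by move=> x y; rewrite mulmxDl.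
by exists (mulmx^~ (invmx M)) => x; [exact: mulmxK | exact: mulmxKV].
Qed.

Lemma same_orbit_refl r (x : 'rV[int]_r) : same_orbit x x.
Proof. by exists id; split=> //; split=> //; exists id. Qed.

Lemma same_orbit_sym r (x y : 'rV[int]_r) : same_orbit x y -> same_orbit y x.
Proof.
case=> f [[fD [g fK gK]] <-]; exists g; split=> //; split; last by exists f.
by move=> u v; apply: (can_inj fK); rewrite fD !gK.
Qed.

Definition divisible_by r (d : nat) (x : 'rV[int]_r) := exists y, x = y *+ d.

Lemma same_orbit_divisible_by r d (x y : 'rV[int]_r) :
  same_orbit x y -> divisible_by d x -> divisible_by d y.
Proof. by case=> f [[fD _] <-] [z ->]; exists (f z); rewrite morph_addMn. Qed.

Definition e0 {r} : 'rV[int]_r.+1 := delta_mx 0 0.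

Lemma e0Mn00 r (c : nat) : (e0 *+ c : 'rV[int]_r.+1) 0 0 = c%:R.
Proof. by rewrite mulmxnE mxE !eqxx. Qed.

Lemma divisible_by_e0Mn r d c : divisible_by d (e0 *+ c : 'rV[int]_r.+1) -> (d %| c)%N.
Proof.
case=> y /matrixP /(_ 0 0); rewrite e0Mn00 mulmxnE natz => cE.
change (d%:Z %| c%:Z)%Z; by rewrite cE -mulr_natr natz dvdz_mull.
Qed.

Lemma same_orbit_e0Mn_inj r (c c' : nat) :
  same_orbit (e0 *+ c : 'rV[int]_r.+1) (e0 *+ c') -> c = c'.
Proof.
move=> o; apply/eqP; rewrite eqn_dvd; apply/andP; split.
  by apply: divisible_by_e0Mn (same_orbit_divisible_by o _); exists e0.
by apply: divisible_by_e0Mn (same_orbit_divisible_by (same_orbit_sym o) _); exists e0.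
Qed.

Lemma is_word_entry_le r (s : seq 'rV[int]_r) g (j : 'I_r) :
  is_word s g -> (absz (g ord0 j) <= size s)%N.
Proof.
case=> sgen <-; rewrite -lez_nat abszE.
elim: s sgen => [|v s IHs] sgen; first by rewrite big_nil mxE normr0.
rewrite big_cons mxE /= -[(size s).+1]addn1 PoszD addrC.
apply: le_trans (ler_normD _ _) _; apply: lerD.
  by apply: IHs => w sw; apply: sgen; rewrite in_cons sw orbT.
by have [i [->|->]] := sgen v (mem_head _ _); rewrite ?mxE ?normrN; case: (_ && _).
Qed.

Lemma word_length_e0Mn r (c : nat) : word_length (e0 *+ c : 'rV[int]_r.+1) c.
Proof.
split; last by move=> s /(is_word_entry_le 0); rewrite e0Mn00 natz.
exists (nseq c e0); split; first by rewrite size_nseq.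
split; first by move=> v; rewrite mem_nseq => /andP[_ /eqP ->]; exists 0; left.
by rewrite big_nseq; elim: c => [|c IHc]; rewrite ?mulr0n // iterS IHc mulrS.
Qed.

Lemma row_Smith_normal_form r (y : 'rV[int]_r.+1) :
  exists c : nat, exists2 R : 'M[int]_r.+1, R \in unitmx & y = (e0 *+ c) *m R.
Proof.
have [L _ [R uR [d _ yE]]] := int_Smith_normal_form y.
set LD := L *m _ in yE; pose c : int := LD 0 0.
have LDE : LD = c *: e0.
  apply/matrixP => i j; rewrite (ord1 i) /c !mxE !big_ord1 !mxE.
  have [->|j0] := eqVneq j 0; first by rewrite !eqxx mulr1.
  have /negbTE j0N : (0 != j :> nat) by apply: contra j0 => /eqP j0; apply/eqP/val_inj.
  by rewrite j0N andbF !mulr0n !mulr0.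
(* the sign of c is absorbed into R *)
exists (absz c), ((-1) ^+ (c < 0)%R *: R); first by rewrite unitmxZ ?unitrX ?unitrN1.
by rewrite yE LDE -scaler_nat -!scalemxAl -scalemxAr scalerA natz abszEsign mulrC signrMK.
Qed.

Lemma is_word_orbit_e0Mn r (s : seq 'rV[int]_r.+1) y :
  is_word s y -> exists2 c, (c <= size s)%N & same_orbit (e0 *+ c) y.
Proof.
move=> w; case: (pickP (fun j => y 0 j != 0)) => [j yj | y0]; last first.
  have -> : y = 0.
    by apply/matrixP => i j; rewrite (ord1 i) mxE; apply/eqP/negbFE/y0.
  by exists 0%N; rewrite ?mulr0n //; apply: same_orbit_refl.
have [c [R uR yE]] := row_Smith_normal_form y.
exists c; last by exists (mulmx^~ R); split; [exact: is_aut_mulmx | rewrite yE].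
have yjE : y 0 j = c%:R * R 0 j by rewrite yE /e0 -scaler_nat -scalemxAl -rowE !mxE.
apply: leq_trans (is_word_entry_le j w).
by rewrite dvdn_leq ?absz_gt0 // yjE abszM natz dvdn_mulr.
Qed.

Theorem mainTheorem9 (r : nat) (hr : (0 < r)%N) (n : nat) :
  exists f : 'I_n.+1 -> 'rV[int]_r,
    [/\ (forall i, exists y k, [/\ same_orbit (f i) y, (k <= n)%N & word_length y k]),
        (forall i j, same_orbit (f i) (f j) -> i = j)
      & (forall y k, (k <= n)%N -> word_length y k -> exists i, same_orbit (f i) y)].
Proof.
case: r hr => // r _.
exists (fun i : 'I_n.+1 => e0 *+ i); split.
- move=> i; exists (e0 *+ i), i.
  by split; [exact: same_orbit_refl | rewrite -ltnS | exact: word_length_e0Mn].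
- by move=> i j /same_orbit_e0Mn_inj /val_inj.
move=> y k kn [[s [sk w]] _]; have [c cs o] := is_word_orbit_e0Mn w.
by exists (inord c); rewrite inordK // ltnS (leq_trans cs) ?sk.
Qed.
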